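(* Let $d\ge 1$, let $\Lambda$ be a $(d-2)$-dimensional simplicial complex with vertex set $[n]$, and let $\Gamma=0*\Lambda$ be the cone over $\Lambda$ with a new apex vertex $0$. Let $p':[n]\to\mathbb{R}^{d-1}$ be such that the coordinates $\{p'(s)_t:s\in[n],t\in[d-1]\}$ are algebraically independent over $\mathbb{Q}$, and set $\mathbb{F}'=\mathbb{Q}(p'(s)_t:s\in[n],t\in[d-1])$. Let $a_1,\dots,a_n\in\mathbb{R}$ be algebraically independent over $\mathbb{F}'$, and let $\mathbb{F}\subseteq\mathbb{R}$ be any field containing $\mathbb{F}'(a_1,\dots,a_n)$. Define $p:\{0,1,\dots,n\}\to\mathbb{F}^d$ by $p(0)=(0,\dots,0,-1)$ and $p(s)=((1+a_s)p'(s),a_s)$ for $s\in[n]$. Then for all $0\le i\le d-1$ there exists an $\mathbb{F}'$-linear map $\psi_i:\mathcal{S}^\ell_i(\Lambda,p';\mathbb{F}')\to\mathcal{S}^\ell_i(\Gamma,p;\mathbb{F})$ such that: (1) for every $\omega'\in\mathcal{S}^\ell_i(\Lambda,p';\mathbb{F}')$, $\mathrm{supp}(\psi_i(\omega'))=\mathrm{skel}_{i-1}(0*\mathrm{supp}(\omega'))$; and (2) with $c'=\sum_{j=1}^n x_j$ and $c=\sum_{j=0}^n x_j$, $\psi_{i-1}(\partial_{c'}\omega')=\partial_c(\psi_i(\omega'))$ for all $\omega'\in\mathcal{S}^\ell_i(\Lambda,p';\mathbb{F}')$ (for $1\le i\le d-1$).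
   Context: Simplicial complexes are nonempty families of subsets of a finite vertex set closed under subsets and containing all singletons; an $i$-face has $i+1$ elements. The cone $0*\Lambda=\{\sigma,\sigma\cup\{0\}:\sigma\in\Lambda\}$. $\mathrm{skel}_m(K)$ is the subcomplex of faces of dimension $\le m$. For a complex $K$ with vertex set $W$, a field $\mathbb{K}\subseteq\mathbb{R}$ and a map $r:W\to\mathbb{K}^e$ where $e-1=\dim K$, set $\theta_t=\sum_{v\in W}r(v)_tx_v\in\mathbb{K}[x_v:v\in W]$ for $t\in[e]$, and for a linear form $\ell=\sum_v\ell_vx_v$ let $\partial_\ell=\sum_v\ell_v\,\partial/\partial x_v$. A linear $i$-stress on $(K,r;\mathbb{K})$ is a homogeneous degree-$i$ polynomial $\lambda\in\mathbb{K}[x_v]$ such that every monomial with nonzero coefficient has support (set of variables dividing it) a face of $K$, and $\partial_{\theta_t}\lambda=0$ for all $t\in[e]$; these form the $\mathbb{K}$-vector space $\mathcal{S}^\ell_i(K,r;\mathbb{K})$. For a stress $\lambda$ of degree $i$ and an $(i-1)$-face $\sigma$, $\lambda_\sigma$ is the coefficient of $\prod_{v\in\sigma}x_v$, and $\mathrm{supp}(\lambda)$ is the subcomplex generated by all $(i-1)$-faces $\sigma$ with $\lambda_\sigma\neq0$. *)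

From HB Require Import structures.
From mathcomp Require Import all_boot all_order all_algebra.
From mathcomp Require Import reals.
From mathcomp Require Import mpoly.
Set Implicit Arguments. Unset Strict Implicit. Unset Printing Implicit Defensive.
Import Order.TTheory GRing.Theory Num.Theory.
Local Open Scope ring_scope.

Definition subfield (R : fieldType) (K : R -> Prop) : Prop :=
  [/\ K 0, K 1,
      (forall x y, K x -> K y -> K (x - y)),
      (forall x y, K x -> K y -> K (x * y)) &
      (forall x, K x -> x != 0 -> K x^-1)].

Definition gen_field (R : fieldType) (S : R -> Prop) : R -> Prop :=
  fun x => forall K : R -> Prop, subfield K -> (forall y, S y -> K y) -> K x.

Definition rat_field (R : fieldType) : R -> Prop := fun x => exists q : rat, x = ratr q.

Definition alg_indep (R : fieldType) (K : R -> Prop) (I : finType) (x : I -> R) : Prop :=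
  forall P : {mpoly R[#|I|]}, (forall m, K P@_m) ->
    meval (fun j => x (enum_val j)) P = 0 -> P = 0.

Definition is_complex (V : finType) (W : {set V}) (K : {set {set V}}) : Prop :=
  [/\ K != set0,
      (forall s t : {set V}, s \in K -> t \subset s -> t \in K),
      (forall v, v \in W -> [set v] \in K) &
      (forall s : {set V}, s \in K -> s \subset W)].

(** [K] has dimension [c - 1]: the maximal cardinality of a face is [c]. *)
Definition card_dim (V : finType) (K : {set {set V}}) (c : nat) : Prop :=
  (forall s : {set V}, s \in K -> #|s| <= c)%N /\ exists2 s : {set V}, s \in K & #|s| = c.

Definition cone (V : finType) (v : V) (K : {set {set V}}) : {set {set V}} :=
  [set t : {set V} | [exists s in K, (t == s) || (t == v |: s)]].

(** [skel_card k K] = faces of [K] with at most [k] elements,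
    i.e. skel_{k-1}(K) (faces of dimension <= k-1). *)
Definition skel_card (V : finType) (k : nat) (K : {set {set V}}) : {set {set V}} :=
  [set t in K | #|t| <= k]%N.

Definition sqmon (n : nat) (s : {set 'I_n}) : 'X_{1..n} :=
  [multinom (i \in s : nat) | i < n].

Definition mono_supp (n : nat) (m : 'X_{1..n}) : {set 'I_n} := [set i | m i != 0%N].

Definition dlin (R : nzRingType) (n : nat) (l : 'I_n -> R) (p : {mpoly R[n]}) : {mpoly R[n]} :=
  \sum_(i < n) l i *: p^`M(i).

(** [lam] is a linear [i]-stress on (K, r; Kf), where K has vertex set [W]
    and r : W -> R^k (values of r outside W are ignored);
    theta_t = sum_{v in W} r(v)_t x_v. *)
Definition is_stress (R : nzRingType) (n : nat) (Kf : R -> Prop) (W : {set 'I_n})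
    (K : {set {set 'I_n}}) (k : nat) (r : 'I_n -> 'I_k -> R) (i : nat)
    (lam : {mpoly R[n]}) : Prop :=
  [/\ (forall m, Kf lam@_m),
      (forall m, lam@_m != 0 -> mdeg m = i),
      (forall m, lam@_m != 0 -> mono_supp m \in K) &
      (forall t : 'I_k, dlin (fun v => if v \in W then r v t else 0) lam = 0)].

Definition supp (R : nzRingType) (n : nat) (i : nat) (lam : {mpoly R[n]}) : {set {set 'I_n}} :=
  [set t : {set 'I_n} | [exists s : {set 'I_n}, [&& #|s| == i, lam@_(sqmon s) != 0 & t \subset s]]].

From mathcomp Require Import all_boot all_order all_algebra.
From mathcomp Require Import reals.
From mathcomp Require Import mpoly.
From mathcomp Require Import ring.
Import GRing.Theory Num.Theory.
Set Implicit Arguments. Unset Strict Implicit. Unset Printing Implicit Defensive.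
Local Open Scope ring_scope.

(* The lift is the linear change of variables psi(w) = w(y), where y_0 = 0 and
   y_s = (x_s + a_s x_0) / (1 + a_s) for s in [n].  By the chain rule, differentiating
   psi(w) along a linear form amounts to differentiating w along the pulled-back form;
   the pull-backs of the forms theta_t of p are the forms theta'_t of p' and 0, and the
   pull-back of c is c'.  Hence psi maps stresses to stresses and intertwines the two
   derivations.  A face s avoiding 0 has coefficient w_s times a nonzero constant in
   psi(w), while the face tau U {0} has coefficient a nonzero multiple of
   sum_j a_j/(1 + a_j) (tau_j + 1) w_(tau + e_j).  By the algebraic independence of the
   a_j over F' this vanishes only if all w_(tau + e_j) do, and a coefficient
   w_(tau + e_j) with j in tau is nonzero only if one with j outside tau is: otherwise
   the stress equations at tau would be a linear dependence among the at most d - 1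
   generic vectors p'(j), j in tau. *)

Section Subfield.
Variables (R : fieldType) (K : R -> Prop).
Hypothesis Ksub : subfield K.

Lemma subfield0 : K 0. Proof. by case: Ksub. Qed.
Lemma subfield1 : K 1. Proof. by case: Ksub. Qed.
Lemma subfieldB x y : K x -> K y -> K (x - y). Proof. by case: Ksub => _ _ + _ _; apply. Qed.
Lemma subfieldM x y : K x -> K y -> K (x * y). Proof. by case: Ksub => _ _ _ + _; apply. Qed.
Lemma subfieldN x : K x -> K (- x).
Proof. by rewrite -sub0r; apply: subfieldB subfield0. Qed.
Lemma subfieldD x y : K x -> K y -> K (x + y).
Proof. by move=> Kx /subfieldN Ky; rewrite -[y]opprK; apply: subfieldB. Qed.
Lemma subfieldV x : K x -> K x^-1.
Proof.
have [->|x_neq0 Kx] := eqVneq x 0; first by rewrite invr0.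
by case: Ksub => _ _ _ _; apply.
Qed.
Lemma subfield_nat k : K k%:R.
Proof.
elim: k => [|k IHk]; first exact: subfield0.
by rewrite -addn1 natrD; apply: subfieldD IHk subfield1.
Qed.
Lemma subfieldMn x k : K x -> K (x *+ k).
Proof. by rewrite -mulr_natr => Kx; apply: subfieldM Kx (subfield_nat k). Qed.

Definition mpoly_over (N : nat) (p : {mpoly R[N]}) := forall m, K p@_m.

Section MpolyOver.
Variable N : nat.
Implicit Types p q : {mpoly R[N]}.

Lemma mpoly_over1 : mpoly_over (1 : {mpoly R[N]}).
Proof. by move=> m; rewrite mcoeff1; apply: subfield_nat. Qed.
Lemma mpoly_overX m : mpoly_over ('X_[m] : {mpoly R[N]}).
Proof. by move=> m'; rewrite mcoeffX; apply: subfield_nat. Qed.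
Lemma mpoly_overD p q : mpoly_over p -> mpoly_over q -> mpoly_over (p + q).
Proof. by move=> Kp Kq m; rewrite mcoeffD; apply: subfieldD. Qed.
Lemma mpoly_overN p : mpoly_over p -> mpoly_over (- p).
Proof. by move=> Kp m; rewrite mcoeffN; apply: subfieldN. Qed.
Lemma mpoly_overZ c p : K c -> mpoly_over p -> mpoly_over (c *: p).
Proof. by move=> Kc Kp m; rewrite mcoeffZ; apply: subfieldM. Qed.
Lemma mpoly_overM p q : mpoly_over p -> mpoly_over q -> mpoly_over (p * q).
Proof.
move=> Kp Kq m; rewrite mcoeffM; apply: (big_ind K); first exact: subfield0.
  exact: subfieldD.
by move=> i _; apply: subfieldM.
Qed.
Lemma mpoly_over_sum (I : Type) (r : seq I) (P : pred I) (F : I -> {mpoly R[N]}) :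
  (forall i, P i -> mpoly_over (F i)) -> mpoly_over (\sum_(i <- r | P i) F i).
Proof.
move=> KF; apply: (big_ind (@mpoly_over N)) => //; last exact: mpoly_overD.
by move=> m; rewrite mcoeff0; apply: subfield0.
Qed.
Lemma mpoly_over_prod (I : Type) (r : seq I) (P : pred I) (F : I -> {mpoly R[N]}) :
  (forall i, P i -> mpoly_over (F i)) -> mpoly_over (\prod_(i <- r | P i) F i).
Proof.
by move=> KF; apply: (big_ind (@mpoly_over N)) => //; [exact: mpoly_over1 | exact: mpoly_overM].
Qed.
Lemma mpoly_overXn p k : mpoly_over p -> mpoly_over (p ^+ k).
Proof. by move=> Kp; rewrite -(card_ord k) -prodr_const; apply: mpoly_over_prod. Qed.
End MpolyOver.

Lemma mpoly_over_comp N M (p : {mpoly R[N]}) (lq : N.-tuple {mpoly R[M]}) :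
  mpoly_over p -> (forall i, mpoly_over (tnth lq i)) -> mpoly_over (p \mPo lq).
Proof.
move=> Kp Klq; rewrite comp_mpolyE; apply: mpoly_over_sum => m _.
by apply: mpoly_overZ => //; apply: mpoly_over_prod => i _; apply: mpoly_overXn.
Qed.
End Subfield.

Lemma gen_field_subfield (R : fieldType) (S : R -> Prop) : subfield (gen_field S).
Proof.
split=> [K [] | K [] | x y Sx Sy K KK KS | x y Sx Sy K KK KS | x Sx x_neq0 K KK KS] //.
- by apply: subfieldB; [|apply: Sx|apply: Sy].
- by apply: subfieldM; [|apply: Sx|apply: Sy].
- by apply: subfieldV; [|apply: Sx].
Qed.

Lemma gen_field_ge (R : fieldType) (S : R -> Prop) x : S x -> gen_field S x.
Proof. by move=> Sx K _; apply. Qed.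

Lemma rat_field_subfield (R : numFieldType) : subfield (@rat_field R).
Proof.
split=> [|| x y [q ->] [r ->] | x y [q ->] [r ->] | x [q ->] _].
- by exists 0; rewrite rmorph0.
- by exists 1; rewrite rmorph1.
- by exists (q - r); rewrite rmorphB.
- by exists (q * r); rewrite rmorphM.
- by exists q^-1; rewrite fmorphV.
Qed.

Section Derivation.
Variables (R : comNzRingType) (N : nat).
Implicit Types (p q : {mpoly R[N]}) (l : 'I_N -> R).

Lemma mderivXU (i k : 'I_N) : ('X_i : {mpoly R[N]})^`M(k) = (i == k)%:R.
Proof.
rewrite mderivX mnm1E; have [<-|_] := eqVneq i k; last by rewrite scale0r.
by rewrite -{1}[U_(i)%MM]add0m addmK mpolyX0 scale1r.
Qed.

Lemma dlinD l p q : dlin l (p + q) = dlin l p + dlin l q.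
Proof. by rewrite /dlin -big_split; apply: eq_bigr => k _; rewrite mderivD scalerDr. Qed.

Lemma dlinZ l c p : dlin l (c *: p) = c *: dlin l p.
Proof. by rewrite /dlin scaler_sumr; apply: eq_bigr => k _; rewrite mderivZ !scalerA mulrC. Qed.

Lemma eq_dlin l1 l2 p : l1 =1 l2 -> dlin l1 p = dlin l2 p.
Proof. by move=> eq_l; apply: eq_bigr => k _; rewrite eq_l. Qed.

Lemma dlin0 p : dlin (fun _ => 0) p = 0.
Proof. by rewrite /dlin big1 // => k _; rewrite scale0r. Qed.

Lemma dlinXU l i : dlin l ('X_i : {mpoly R[N]}) = (l i)%:MP.
Proof.
rewrite /dlin (bigD1 i) //= mderivXU eqxx big1 ?addr0 -?alg_mpolyC // => k k_neq_i.
by rewrite mderivXU eq_sym (negbTE k_neq_i) scaler0.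
Qed.

Lemma dlin_delta i p : dlin (fun k => (k == i)%:R) p = p^`M(i).
Proof.
rewrite /dlin (bigD1 i) //= eqxx scale1r big1 ?addr0 // => k k_neq_i.
by rewrite (negbTE k_neq_i) scale0r.
Qed.

Lemma mcoeff_dlin l p m :
  (dlin l p)@_m = \sum_k l k * (p@_(m + U_(k)) *+ (m k).+1).
Proof.
rewrite /dlin raddf_sum; apply: eq_bigr => k _ /=.
by rewrite -mul_mpolyC mcoeffCM mcoeff_deriv.
Qed.

Variables (M : nat) (z : N.-tuple {mpoly R[M]}).

Lemma mderiv_comp p k :
  (p \mPo z)^`M(k) = \sum_(j < N) (p^`M(j) \mPo z) * (tnth z j)^`M(k).
Proof.
(* Both sides are derivations along [q |-> q \mPo z] in [q], and they agree on variables. *)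
pose chain q := forall k,
  (q \mPo z)^`M(k) = \sum_(j < N) (q^`M(j) \mPo z) * (tnth z j)^`M(k).
have chainD q1 q2 : chain q1 -> chain q2 -> chain (q1 + q2).
  move=> ch1 ch2 k'; rewrite comp_mpolyD mderivD ch1 ch2 -big_split /=.
  by apply: eq_bigr => j _; rewrite mderivD comp_mpolyD mulrDl.
have chainM q1 q2 : chain q1 -> chain q2 -> chain (q1 * q2).
  move=> ch1 ch2 k'; rewrite rmorphM /= mderivM ch1 ch2 mulr_suml mulr_sumr -big_split.
  by apply: eq_bigr => j _ /=; rewrite mderivM comp_mpolyD !rmorphM /=; ring.
have chain1 : chain 1.
  move=> k'; rewrite comp_mpoly1 -mpolyC1 mderivC big1 // => j _.
  by rewrite mderivC comp_mpoly0 mul0r.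
have chainX i : chain 'X_i.
  move=> k'; rewrite comp_mpolyXU -tnth_nth (bigD1 i) //= mderivXU eqxx.
  rewrite rmorph1 mul1r big1 ?addr0 // => j j_neq_i.
  by rewrite mderivXU eq_sym (negbTE j_neq_i) rmorph0 mul0r.
move: k; rewrite [p]mpolyE; apply: (big_ind chain) => [k|//|m _].
  by rewrite comp_mpoly0 mderiv0 big1 // => j _; rewrite mderiv0 comp_mpoly0 mul0r.
move=> k; rewrite comp_mpolyZ mderivZ.
under eq_bigr do rewrite mderivZ comp_mpolyZ -scalerAl.
rewrite -scaler_sumr; congr (_ *: _); move: k.
rewrite mpolyXE_id; apply: (big_ind chain) => // i _.
by elim: (m i) => [|k IHk]; rewrite ?expr0 // exprS; apply: chainM.
Qed.

Lemma dlin_comp (l : 'I_M -> R) p :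
  dlin l (p \mPo z) = \sum_(j < N) (p^`M(j) \mPo z) * dlin l (tnth z j).
Proof.
rewrite /dlin; under eq_bigr => k _ do rewrite mderiv_comp scaler_sumr.
rewrite exchange_big /=; apply: eq_bigr => j _; rewrite mulr_sumr.
by apply: eq_bigr => k _; rewrite scalerAr.
Qed.
End Derivation.

Lemma mcoeff_comp_diag (R : comNzRingType) N (p : {mpoly R[N]})
    (lq : N.-tuple {mpoly R[N]}) (f : 'X_{1..N} -> R) :
  (forall m, 'X_[m] \mPo lq = f m *: 'X_[m]) ->
  forall m, (p \mPo lq)@_m = p@_m * f m.
Proof.
move=> lqX m; rewrite comp_mpolyEX.
have -> : p@_m = (\sum_(m' <- msupp p) p@_m' *: 'X_[m'])@_m by rewrite -mpolyE.
rewrite !raddf_sum /= mulr_suml.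
apply: eq_bigr => m' _; rewrite lqX scalerA -!mul_mpolyC !mcoeffCM !mcoeffX.
by have [->|_] := eqVneq m' m; rewrite ?mulr1 ?mulr0 ?mul0r.
Qed.

Lemma comp_mpolyA (R : comNzRingType) N M L (p : {mpoly R[N]})
    (lq : N.-tuple {mpoly R[M]}) (lr : M.-tuple {mpoly R[L]}) :
  (p \mPo lq) \mPo lr = p \mPo [tuple tnth lq i \mPo lr | i < N].
Proof.
rewrite [p \mPo lq]comp_mpolyEX [RHS]comp_mpolyEX raddf_sum; apply: eq_bigr => m _ /=.
rewrite comp_mpolyZ !comp_mpolyX rmorph_prod; congr (_ *: _); apply: eq_bigr => i _.
by rewrite rmorphXn tnth_mktuple.
Qed.

Lemma dhomog_mcoeffP (R : nzRingType) N d (p : {mpoly R[N]}) :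
  reflect (forall m, p@_m != 0 -> mdeg m = d) (p \is d.-homog).
Proof.
apply: (iffP (dhomogP _ _ _)) => p_homog m; first by rewrite -mcoeff_msupp; apply: p_homog.
by rewrite mcoeff_msupp; apply: p_homog.
Qed.

Lemma comp_mpoly_dhomog (R : comNzRingType) N M d (p : {mpoly R[N]})
    (lq : N.-tuple {mpoly R[M]}) :
  p \is d.-homog -> (forall i, tnth lq i \is 1.-homog) -> p \mPo lq \is d.-homog.
Proof.
move=> /dhomogP p_homog lq_homog.
have prod_homog (m : 'X_{1..N}) : \prod_i tnth lq i ^+ m i \is (mdeg m).-homog.
  rewrite mdegE; elim: (index_enum _) => [|j r IHr]; first by rewrite !big_nil; exact: dhomog1.
  rewrite !big_cons; apply: dhomogM IHr.
  by have := dhomogMn (m j) (lq_homog j); rewrite mul1n.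
rewrite comp_mpolyE big_seq; apply: (big_ind (fun q => q \is d.-homog)).
- exact: dhomog0.
- exact: dhomogD.
- by move=> m m_supp; apply: dhomogZ; rewrite -(p_homog m m_supp).
Qed.

Section ConeSubstitution.
Variables (R : comNzRingType) (n : nat) (al be : 'I_n.+1 -> R).

Definition cone_subst : n.+1.-tuple {mpoly R[n.+1]} :=
  [tuple al i *: 'X_i + be i *: 'X_ord0 | i < n.+1].

Lemma cone_subst_homog i : tnth cone_subst i \is 1.-homog.
Proof.
rewrite tnth_mktuple.
by apply: rpredD; apply: rpredZ; rewrite dhomogX; apply/eqP; apply: mdeg1.
Qed.

Lemma dlin_cone_subst (l : 'I_n.+1 -> R) (p : {mpoly R[n.+1]}) :
  dlin l (p \mPo cone_subst) =
  dlin (fun j => l j * al j + l ord0 * be j) p \mPo cone_subst.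
Proof.
rewrite dlin_comp; under eq_bigr => j _ do
  rewrite tnth_mktuple dlinD !dlinZ !dlinXU -!mul_mpolyC -!mpolyCM -rmorphD /=.
rewrite /dlin raddf_sum; apply: eq_bigr => j _ /=.
by rewrite comp_mpolyZ mulrC mul_mpolyC !(mulrC (l _)).
Qed.

Hypotheses (al0 : al ord0 = 0) (be0 : be ord0 = 0).

Lemma mcoeff_cone_subst (p : {mpoly R[n.+1]}) (m : 'X_{1..n.+1}) :
  m ord0 = 0%N -> (p \mPo cone_subst)@_m = p@_m * \prod_i al i ^+ m i.
Proof.
(* Setting x_0 := 0 keeps the coefficients of the monomials avoiding x_0 and turns
   the substitution into the diagonal one x_i |-> al_i x_i. *)
move=> m0.
pose kill0 : n.+1.-tuple {mpoly R[n.+1]} :=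
  [tuple if i == ord0 then 0 else 'X_i | i < n.+1].
have kill0X (m' : 'X_{1..n.+1}) : 'X_[m'] \mPo kill0 = (m' ord0 == 0%N)%:R *: 'X_[m'].
  rewrite comp_mpolyX; have [m'0|m'0] := eqVneq (m' ord0) 0%N.
    rewrite scale1r mpolyXE_id; apply: eq_bigr => i _; rewrite tnth_mktuple.
    by have [->|//] := eqVneq i ord0; rewrite m'0 !expr0.
  by rewrite scale0r (bigD1 ord0) //= tnth_mktuple eqxx expr0n (negbTE m'0) mul0r.
have := mcoeff_comp_diag (p \mPo cone_subst) kill0X m; rewrite m0 eqxx mulr1 => <-.
rewrite comp_mpolyA.
apply: (@mcoeff_comp_diag _ _ _ _ (fun m' => \prod_i al i ^+ m' i)) => m'.
rewrite comp_mpolyX mpolyXE_id -scaler_prod; apply: eq_bigr => i _.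
rewrite !tnth_mktuple comp_mpolyD !comp_mpolyZ !comp_mpolyXU -!tnth_nth !tnth_mktuple.
rewrite eqxx scaler0 addr0 -exprZn; have [->|//] := eqVneq i ord0.
by rewrite al0 !scale0r.
Qed.

Lemma mcoeff_cone_subst_apex (p : {mpoly R[n.+1]}) (m : 'X_{1..n.+1}) :
  m ord0 = 0%N ->
  (p \mPo cone_subst)@_(m + U_(ord0)) = (dlin be p)@_m * \prod_i al i ^+ m i.
Proof.
move=> m0.
have <- : ((p \mPo cone_subst)^`M(ord0))@_m = (p \mPo cone_subst)@_(m + U_(ord0)).
  by rewrite mcoeff_deriv m0.
rewrite -dlin_delta dlin_cone_subst mcoeff_cone_subst //; congr (_@__ * _).
apply: eq_dlin => j; rewrite eqxx mul1r; have [->|j_neq0] := eqVneq j ord0.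
  by rewrite al0 be0 mulr0 addr0.
by rewrite mul0r add0r.
Qed.
End ConeSubstitution.

Section AlgIndep.
Variables (R : fieldType) (K : R -> Prop) (I : finType) (x : I -> R).
Hypotheses (Ksub : subfield K) (x_indep : alg_indep K x).

Definition enum_var (i : I) : {mpoly R[#|I|]} := 'X_(enum_rank i).
Definition enum_point (j : 'I_#|I|) : R := x (enum_val j).

Lemma meval_enum_var v i : (enum_var i).@[v] = v (enum_rank i).
Proof. exact: mevalXU. Qed.

Lemma meval_enum_point i : (enum_var i).@[enum_point] = x i.
Proof. by rewrite meval_enum_var /enum_point enum_rankK. Qed.

Lemma alg_indep_meval_neq0 P v :
  mpoly_over K P -> P.@[v] != 0 -> P.@[enum_point] != 0.
Proof. by move=> KP; apply: contra_neq => /(x_indep KP) ->; rewrite meval0. Qed.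

Lemma alg_indep_add1_neq0 i : 1 + x i != 0.
Proof.
have KP : mpoly_over K (1 + enum_var i).
  by apply: mpoly_overD => //; [exact: mpoly_over1 | exact: mpoly_overX].
have := alg_indep_meval_neq0 (v := fun _ => 0) KP.
rewrite !mevalD !meval1 meval_enum_var meval_enum_point addr0; apply; exact: oner_neq0.
Qed.

(* Clearing denominators gives the polynomial sum_i c_i X_i prod_(u != i) (1 + X_u),
   which is nonzero at the i0-th unit vector. *)
Lemma alg_indep_sum_frac_neq0 (c : I -> R) : (forall i, K (c i)) -> (exists i, c i != 0) ->
  \sum_i c i * (x i / (1 + x i)) != 0.
Proof.
move=> Kc [i0 ci0_neq0].
pose P := \sum_i c i *: (enum_var i * \prod_(u | u != i) (1 + enum_var u)).
have KP : mpoly_over K P.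
  apply: mpoly_over_sum => // i _; apply: mpoly_overZ => //.
  apply: mpoly_overM => //; first exact: mpoly_overX.
  apply: mpoly_over_prod => // u _.
  by apply: mpoly_overD => //; [exact: mpoly_over1 | exact: mpoly_overX].
have P_unit : P.@[fun j => (j == enum_rank i0)%:R] != 0.
  rewrite /P raddf_sum (bigD1 i0) //= [X in _ + X]big1 => [|i i_neq_i0].
    rewrite addr0 mevalZ mevalM meval_enum_var eqxx mul1r rmorph_prod /= big1 ?mulr1 //.
    move=> u u_neq_i0; rewrite mevalD meval1 meval_enum_var.
    by rewrite (inj_eq enum_rank_inj) (negbTE u_neq_i0) addr0.
  rewrite mevalZ mevalM meval_enum_var.
  by rewrite (inj_eq enum_rank_inj) (negbTE i_neq_i0) mul0r mulr0.
have := alg_indep_meval_neq0 KP P_unit; apply: contra => /eqP sum_eq0.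
have -> : P.@[enum_point] = (\sum_i c i * (x i / (1 + x i))) * \prod_u (1 + x u).
  rewrite /P raddf_sum mulr_suml; apply: eq_bigr => i _ /=.
  rewrite mevalZ mevalM meval_enum_point rmorph_prod /=.
  under eq_bigr do rewrite mevalD meval1 meval_enum_point.
  rewrite [in RHS](bigD1 i) //=.
  by field; apply: alg_indep_add1_neq0.
by rewrite sum_eq0 mul0r.
Qed.

(* The generic determinant specializes to the identity matrix at the indicator
   point of the diagonal entries. *)
Lemma alg_indep_det_neq0 k (h : 'I_k * 'I_k -> I) :
  injective h -> \det (\matrix_(r, t) x (h (r, t))) != 0.
Proof.
move=> h_inj.
pose D := \det (\matrix_(r, t) enum_var (h (r, t))).
have KD : mpoly_over K D.
  apply: mpoly_over_sum => // s _; apply: mpoly_overM => //.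
    by apply: mpoly_overXn => //; apply: mpoly_overN => //; exact: mpoly_over1.
  by apply: mpoly_over_prod => // i _; rewrite mxE; exact: mpoly_overX.
pose v (j : 'I_#|I|) : R := [exists r, enum_val j == h (r, r)]%:R.
have D_v : D.@[v] = 1.
  rewrite /D -det_map_mx -[RHS](det1 R k); congr (\det _); apply/matrixP => r t.
  rewrite !mxE /= meval_enum_var /v enum_rankK; congr ((nat_of_bool _)%:R).
  by apply/existsP/eqP => [[r' /eqP/h_inj [-> ->]] // | ->]; exists t.
have := alg_indep_meval_neq0 (v := v) KD; rewrite D_v => /(_ (oner_neq0 _)).
rewrite /D -det_map_mx; congr (\det _ != 0).
by apply/matrixP => r t; rewrite !mxE /= meval_enum_point.
Qed.
End AlgIndep.

Lemma alg_indep_free (R : fieldType) (K : R -> Prop) n e (y : 'I_n * 'I_e -> R)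
    (T : {set 'I_n}) (c : 'I_n -> R) :
  subfield K -> alg_indep K y -> (#|T| <= e)%N -> (forall s, s \notin T -> c s = 0) ->
  (forall t, \sum_s c s * y (s, t) = 0) -> forall s, c s = 0.
Proof.
move=> Ksub y_indep T_le c_out c_rel.
pose A : 'M[R]_#|T| := \matrix_(r, t) y (enum_val r, widen_ord T_le t).
pose v : 'rV[R]_#|T| := \row_r c (enum_val r).
have vA : v *m A = 0.
  apply/rowP => t; rewrite !mxE -[RHS](c_rel (widen_ord T_le t)).
  under eq_bigr do rewrite !mxE.
  rewrite [RHS](bigID (mem T)) /= [X in _ = _ + X]big1 ?addr0 => [|s /c_out ->].
    by rewrite [RHS]big_enum_val.
  by rewrite mul0r.
have A_det : \det A != 0.
  apply: (alg_indep_det_neq0 Ksub y_indep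
           (h := fun rt => (enum_val rt.1, widen_ord T_le rt.2))).
  by move=> [r t] [r' t'] [/enum_val_inj -> /val_inj ->].
have v0 : v = 0 by apply: contraNeq A_det => v_neq0; apply/det0P; exists v.
move=> s; have [sT|/c_out //] := boolP (s \in T).
by have := congr1 (fun u : 'rV_ _ => u 0 (enum_rank_in sT s)) v0; rewrite !mxE enum_rankK_in.
Qed.

Lemma neq_ord0_lift n (s : 'I_n.+1) : s != ord0 -> exists s', s = lift ord0 s'.
Proof. by case: (unliftP ord0 s) => [s' ->|->]; [exists s' | rewrite eqxx]. Qed.

Lemma mem_coneD1 (V : finType) (v : V) (K : {set {set V}}) t :
  t :\ v \in K -> t \in cone v K.
Proof.
move=> tK; rewrite inE; apply/existsP; exists (t :\ v); rewrite tK /=.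
have [vt|vt] := boolP (v \in t); first by rewrite setD1K // eqxx orbT.
by apply/orP; left; apply/eqP/esym/setDidPl; rewrite disjoint_sym disjoints1.
Qed.

Section Monomials.
Variable N : nat.
Implicit Types (s : {set 'I_N}) (m : 'X_{1..N}).

Lemma sqmonE s i : sqmon s i = (i \in s).
Proof. by rewrite mnmE. Qed.

Lemma mono_supp_sqmon s : mono_supp (sqmon s) = s.
Proof. by apply/setP => i; rewrite !inE sqmonE; case: (i \in s). Qed.

Lemma mono_suppD m1 m2 : mono_supp (m1 + m2)%MM = mono_supp m1 :|: mono_supp m2.
Proof. by apply/setP => i; rewrite !inE mnmDE addn_eq0 negb_and. Qed.

Lemma mono_suppU (j : 'I_N) : mono_supp U_(j)%MM = [set j].
Proof. by apply/setP => i; rewrite !inE mnm1E [j == i]eq_sym; case: (i == j). Qed.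

Lemma mono_supp0 : mono_supp (0%MM : 'X_{1..N}) = set0.
Proof. by apply/setP => i; rewrite !inE mnm0E. Qed.

Lemma sqmonU1 s j : j \notin s -> sqmon (j |: s) = (sqmon s + U_(j))%MM.
Proof.
move=> j_notin_s; apply/mnmP => i; rewrite mnmDE mnm1E !sqmonE !inE eq_sym.
by have [->|_] := eqVneq i j; rewrite ?(negbTE j_notin_s) ?addn0.
Qed.

Variable R : comNzRingType.
Implicit Types (K : {set {set 'I_N}}) (q : {mpoly R[N]}).

Definition monomials_in K q := forall m, q@_m != 0 -> mono_supp m \in K.

Lemma monomials_in_sum K (I : Type) (r : seq I) (P : pred I) (G : I -> {mpoly R[N]}) :
  (forall i, P i -> monomials_in K (G i)) -> monomials_in K (\sum_(i <- r | P i) G i).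
Proof.
move=> KG; apply: (big_ind (monomials_in K)) => // [m|q1 q2 Kq1 Kq2 m].
  by rewrite mcoeff0 eqxx.
rewrite mcoeffD; have [q1m_eq0|/Kq1 //] := eqVneq q1@_m 0.
by rewrite q1m_eq0 add0r => /Kq2.
Qed.

Lemma monomials_inZ K c q : monomials_in K q -> monomials_in K (c *: q).
Proof.
move=> Kq m; rewrite mcoeffZ => cq_neq0; apply: Kq.
by apply: contraNneq cq_neq0 => ->; rewrite mulr0.
Qed.

Lemma monomials_in_subset K K' q :
  {subset K <= K'} -> monomials_in K q -> monomials_in K' q.
Proof. by move=> KK' Kq m /Kq /KK'. Qed.

Lemma monomials_in_powerset_prod A (I : Type) (r : seq I) (P : pred I) (G : I -> {mpoly R[N]}) :
  (forall i, P i -> monomials_in (powerset A) (G i)) ->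
  monomials_in (powerset A) (\prod_(i <- r | P i) G i).
Proof.
move=> AG; apply: (big_ind (monomials_in (powerset A))) => // [m|q1 q2 Aq1 Aq2 m].
  rewrite mcoeff1; have [-> _|] := eqVneq m 0%MM; last by rewrite eqxx.
  by rewrite mono_supp0 powersetE sub0set.
rewrite mcoeffM => q1q2m.
have [k /andP [/eqP m_split k_nz]] : exists k : 'X_{1..N < (mdeg m).+1, (mdeg m).+1},
    (m == (k.1 + k.2)%MM) && (q1@_k.1 * q2@_k.2 != 0).
  apply/existsP; apply: contraR q1q2m => /existsPn k_eq0; apply/eqP; rewrite big1 // => k mk.
  by move: (k_eq0 k); rewrite mk /= negbK => /eqP.
have q1_neq0 : q1@_k.1 != 0 by apply: contraNneq k_nz => ->; rewrite mul0r.
have q2_neq0 : q2@_k.2 != 0 by apply: contraNneq k_nz => ->; rewrite mulr0.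
rewrite m_split mono_suppD powersetE subUset -!powersetE.
by rewrite (Aq1 _ q1_neq0) (Aq2 _ q2_neq0).
Qed.
End Monomials.

Lemma cone_subst_monomials (R : comNzRingType) n (al be : 'I_n.+1 -> R)
    (K : {set {set 'I_n.+1}}) (p : {mpoly R[n.+1]}) :
  (forall s t : {set 'I_n.+1}, s \in K -> t \subset s -> t \in K) ->
  monomials_in K p -> monomials_in (cone ord0 K) (p \mPo cone_subst al be).
Proof.
move=> K_closed Kp; rewrite comp_mpolyE big_seq; apply: monomials_in_sum => m m_supp.
have Km : mono_supp m \in K by apply: Kp; rewrite -mcoeff_msupp.
apply: (@monomials_inZ n.+1 R).
apply: (monomials_in_subset (K := powerset (ord0 |: mono_supp m))).
  move=> t; rewrite powersetE => t_sub; apply: mem_coneD1; apply: (K_closed _ _ Km).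
  by rewrite subDset.
apply: monomials_in_powerset_prod => i _; rewrite -(card_ord (m i)) -prodr_const.
apply: monomials_in_powerset_prod => k _ m'.
have mi_neq0 : m i != 0%N by rewrite -lt0n (leq_ltn_trans _ (ltn_ord k)).
rewrite tnth_mktuple mcoeffD !mcoeffZ !mcoeffX powersetE.
have [<- _|_] := eqVneq U_(i)%MM m'.
  by rewrite mono_suppU sub1set !inE mi_neq0 orbT.
have [<- _|_] := eqVneq U_(ord0)%MM m'; first by rewrite mono_suppU sub1set setU11.
by rewrite !mulr0 addr0 eqxx.
Qed.

Section ConeLift.
Variables (R : realType) (n e : nat) (Lam : {set {set 'I_n.+1}})
  (p' : 'I_n.+1 -> 'I_e -> R) (a : 'I_n.+1 -> R) (F : R -> Prop).

Definition base_vertices := [set v : 'I_n.+1 | v != ord0].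
Definition base_field := gen_field (fun x : R => exists s t, s != ord0 /\ x = p' s t).
Definition cone_conf (v : 'I_n.+1) (t : 'I_e.+1) : R :=
  if v == ord0 then (if t == ord_max then -1 else 0)
  else match unlift ord_max t with
       | Some t' => (1 + a v) * p' v t'
       | None => a v
       end.

Implicit Types (w : {mpoly R[n.+1]}) (tau : {set 'I_n.+1}).

Local Notation base_stress i w := (is_stress base_field base_vertices Lam p' i w).

Hypothesis Lam_complex : is_complex base_vertices Lam.
Hypothesis Lam_dim : card_dim Lam e.
Hypothesis p'_indep :
  alg_indep (@rat_field R) (fun st : 'I_n * 'I_e => p' (lift ord0 st.1) st.2).
Hypothesis a_indep : alg_indep base_field (fun s : 'I_n => a (lift ord0 s)).
Hypothesis F_subfield : subfield F.
Hypothesis F_ge :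
  forall x, gen_field (fun y => base_field y \/ exists s, s != ord0 /\ y = a s) x -> F x.

Definition lift_scale (s : 'I_n.+1) : R := if s == ord0 then 0 else (1 + a s)^-1.
Definition cone_lift (w : {mpoly R[n.+1]}) :=
  w \mPo cone_subst lift_scale (fun s => a s * lift_scale s).

Lemma lift_scale0 : lift_scale ord0 = 0. Proof. by rewrite /lift_scale eqxx. Qed.

Lemma a_lift_scale0 : a ord0 * lift_scale ord0 = 0. Proof. by rewrite lift_scale0 mulr0. Qed.

Lemma F_base_field x : base_field x -> F x.
Proof. by move=> Fx; apply: F_ge; apply: gen_field_ge; left. Qed.

Lemma F_a s : s != ord0 -> F (a s).
Proof. by move=> s_neq0; apply: F_ge; apply: gen_field_ge; right; exists s. Qed.

Lemma F_lift_scale s : F (lift_scale s).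
Proof.
rewrite /lift_scale; case: eqP => [_|/eqP s_neq0]; first exact: subfield0.
by apply: subfieldV => //; apply: subfieldD => //; [exact: subfield1 | exact: F_a].
Qed.

Lemma F_a_lift_scale s : F (a s * lift_scale s).
Proof.
have [->|s_neq0] := eqVneq s ord0; first by rewrite a_lift_scale0; exact: subfield0.
by apply: subfieldM => //; [exact: F_a | exact: F_lift_scale].
Qed.

Lemma add1a_neq0 s : s != ord0 -> 1 + a s != 0.
Proof.
by move=> /neq_ord0_lift [s' ->]; apply: (alg_indep_add1_neq0 (gen_field_subfield _) a_indep).
Qed.

Lemma lift_scale_neq0 s : s != ord0 -> lift_scale s != 0.
Proof. by move=> s_neq0; rewrite /lift_scale (negbTE s_neq0) invr_eq0 add1a_neq0. Qed.

Lemma mul_add1a_lift_scale s : s != ord0 -> (1 + a s) * lift_scale s = 1.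
Proof. by move=> s_neq0; rewrite /lift_scale (negbTE s_neq0) mulfV ?add1a_neq0. Qed.

Lemma dlin_cone_lift (l : 'I_n.+1 -> R) w :
  dlin l (cone_lift w) = dlin (fun j => (l j + l ord0 * a j) * lift_scale j) w \mPo
                           cone_subst lift_scale (fun s => a s * lift_scale s).
Proof. by rewrite dlin_cone_subst; congr (_ \mPo _); apply: eq_dlin => j; ring. Qed.

Lemma cone_lift_lin (c : R) w1 w2 :
  cone_lift (c *: w1 + w2) = c *: cone_lift w1 + cone_lift w2.
Proof. by rewrite /cone_lift comp_mpolyD comp_mpolyZ. Qed.

Lemma cone_lift_dlin_sum w :
  cone_lift (dlin (fun v => if v == ord0 then 0 else 1) w) = dlin (fun _ => 1) (cone_lift w).
Proof.
rewrite dlin_cone_lift; congr (_ \mPo _); apply: eq_dlin => j.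
have [->|j_neq0] := eqVneq j ord0; first by rewrite lift_scale0 mulr0.
by rewrite mul1r mul_add1a_lift_scale.
Qed.

Lemma stress_cone_lift i w :
  base_stress i w -> is_stress F [set: 'I_n.+1] (cone ord0 Lam) cone_conf i (cone_lift w).
Proof.
case=> w_over w_deg w_faces w_theta; split.
- apply: mpoly_over_comp => // [m|j]; first by apply: F_base_field; apply: w_over.
  rewrite tnth_mktuple; apply: mpoly_overD => //; apply: mpoly_overZ => //;
    by [exact: F_lift_scale | exact: F_a_lift_scale | exact: mpoly_overX].
- apply/dhomog_mcoeffP/comp_mpoly_dhomog; last exact: cone_subst_homog.
  exact/dhomog_mcoeffP.
- by apply: cone_subst_monomials => //; case: Lam_complex.
- move=> t; rewrite (eq_dlin (l2 := fun v => cone_conf v t)) => [|v]; last by rewrite in_setT.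
  rewrite dlin_cone_lift; case: (unliftP ord_max t) => [t' ->|->].
    rewrite (eq_dlin (l2 := fun v => if v \in base_vertices then p' v t' else 0)).
      by rewrite w_theta comp_mpoly0.
    move=> j; rewrite /cone_conf !inE eqxx lift_eqF liftK.
    have [->|j_neq0] := eqVneq j ord0; first by rewrite lift_scale0 mulr0.
    by rewrite mul0r addr0 mulrAC mul_add1a_lift_scale // mul1r.
  rewrite (eq_dlin (l2 := fun _ => 0)) ?dlin0 ?comp_mpoly0 // => j.
  rewrite /cone_conf eqxx unlift_none.
  have [->|j_neq0] := eqVneq j ord0; first by rewrite lift_scale0 mulr0.
  by rewrite mulN1r subrr mul0r.
Qed.

Lemma stress_apex_free i w m : base_stress i w -> w@_m != 0 -> ord0 \notin mono_supp m.
Proof.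
case=> _ _ w_faces _ /w_faces m_face; case: Lam_complex => _ _ _ /(_ _ m_face) /subsetP m_sub.
by apply/negP => /m_sub; rewrite inE eqxx.
Qed.

Lemma lift_scale_prod_neq0 (m : 'X_{1..n.+1}) :
  m ord0 = 0%N -> \prod_i lift_scale i ^+ m i != 0.
Proof.
move=> m0; apply/prodf_neq0 => i _; have [->|i_neq0] := eqVneq i ord0.
  by rewrite m0 expr0 oner_neq0.
by rewrite expf_neq0 // lift_scale_neq0.
Qed.

Lemma mcoeff_cone_lift_base w (s : {set 'I_n.+1}) : ord0 \notin s ->
  ((cone_lift w)@_(sqmon s) != 0) = (w@_(sqmon s) != 0).
Proof.
move=> s0; have m0 : sqmon s ord0 = 0%N by rewrite sqmonE (negbTE s0).
rewrite /cone_lift mcoeff_cone_subst ?a_lift_scale0 //.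
by rewrite mulf_eq0 negb_or lift_scale_prod_neq0 // andbT.
Qed.

Lemma mcoeff_cone_lift_apex w tau : ord0 \notin tau ->
  ((cone_lift w)@_(sqmon (ord0 |: tau)) != 0) =
  ((dlin (fun s => a s * lift_scale s) w)@_(sqmon tau) != 0).
Proof.
move=> tau0; have m0 : sqmon tau ord0 = 0%N by rewrite sqmonE (negbTE tau0).
rewrite sqmonU1 // /cone_lift mcoeff_cone_subst_apex ?a_lift_scale0 //.
by rewrite mulf_eq0 negb_or lift_scale_prod_neq0 // andbT.
Qed.

(* The stress equations at tau form a linear system whose matrix consists of the
   generic vectors p'(s), s in tau; there are at most e of them, so it has full rank. *)
Lemma stress_extend_face i w tau : base_stress i w ->
  (exists k, w@_(sqmon tau + U_(k)) != 0) ->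
  exists2 j, j \notin tau & w@_(sqmon tau + U_(j)) != 0.
Proof.
move=> w_stress [k wk_neq0].
have [/existsP [j /andP [j_tau wj_neq0]] | /existsPn none] :=
  boolP [exists j, (j \notin tau) && (w@_(sqmon tau + U_(j)) != 0)]; first by exists j.
have w_out j : j \notin tau -> w@_(sqmon tau + U_(j)) = 0.
  by move=> j_tau; move: (none j); rewrite j_tau negbK => /eqP.
have k_tau : k \in tau by apply: contraTT wk_neq0 => /w_out ->; rewrite eqxx.
have tau_face : tau \in Lam.
  case: w_stress => _ _ /(_ _ wk_neq0) + _.
  by rewrite mono_suppD mono_suppU mono_supp_sqmon (setUidPl _) // sub1set.
have tau0 : ord0 \notin tau.
  have := stress_apex_free w_stress wk_neq0.
  by rewrite mono_suppD mono_supp_sqmon inE negb_or => /andP[].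
pose T := [set s : 'I_n | lift ord0 s \in tau].
have T_le : (#|T| <= e)%N.
  case: Lam_dim => /(_ _ tau_face) tau_le _; apply: leq_trans tau_le.
  rewrite -(card_imset _ (@lift_inj _ ord0)); apply: subset_leq_card.
  by apply/subsetP => _ /imsetP [s + ->]; rewrite inE.
pose c s := w@_(sqmon tau + U_(lift ord0 s)) *+ (sqmon tau (lift ord0 s)).+1.
have c_out s : s \notin T -> c s = 0 by rewrite inE => /w_out; rewrite /c => ->; rewrite mul0rn.
have c_rel t : \sum_s c s * p' (lift ord0 s) t = 0.
  case: w_stress => _ _ _ /(_ t) /(congr1 (mcoeff (sqmon tau))).
  rewrite mcoeff_dlin mcoeff0 big_ord_recl !inE eqxx mul0r add0r => rel.
  by rewrite -[RHS]rel; apply: eq_bigr => s _; rewrite !inE lift_eqF mulrC.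
have k_neq0 : k != ord0 by apply: contraNneq tau0 => <-.
have [s k_lift] := neq_ord0_lift k_neq0.
have /eqP := alg_indep_free (rat_field_subfield R) p'_indep T_le c_out c_rel s.
by rewrite /c -k_lift mulrn_eq0 /= (negbTE wk_neq0).
Qed.

Lemma mcoeff_dlin_apex i w tau : base_stress i w -> ord0 \notin tau ->
  ((dlin (fun s => a s * lift_scale s) w)@_(sqmon tau) != 0) =
  [exists j, (j \notin tau) && (w@_(sqmon (j |: tau)) != 0)].
Proof.
move=> w_stress tau0; rewrite mcoeff_dlin big_ord_recl a_lift_scale0 mul0r add0r.
pose c s := w@_(sqmon tau + U_(lift ord0 s)) *+ (sqmon tau (lift ord0 s)).+1.
have -> : \sum_(s < n) a (lift ord0 s) * lift_scale (lift ord0 s) * c s =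
          \sum_s c s * (a (lift ord0 s) / (1 + a (lift ord0 s))).
  by apply: eq_bigr => s _; rewrite /lift_scale lift_eqF mulrC.
apply/idP/existsP => [sum_neq0 | [j /andP [j_tau wj_neq0]]].
  have [s cs_neq0] : exists s, c s != 0.
    apply/existsP; apply: contraNT sum_neq0 => /existsPn c_eq0.
    by rewrite big1 // => s _; rewrite (eqP (negPn (c_eq0 s))) mul0r.
  have [|j j_tau wj_neq0] := stress_extend_face (tau := tau) w_stress.
    by exists (lift ord0 s); apply: contraNneq cs_neq0; rewrite /c => ->; rewrite mul0rn.
  by exists j; rewrite j_tau sqmonU1.
apply: (alg_indep_sum_frac_neq0 (gen_field_subfield _) a_indep).
  move=> s; apply: (subfieldMn (gen_field_subfield _)).
  by case: w_stress => w_over _ _ _; apply: w_over.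
have j_neq0 : j != ord0.
  by apply: contraNneq (stress_apex_free w_stress wj_neq0) => ->; rewrite mono_supp_sqmon setU11.
have [s j_lift] := neq_ord0_lift j_neq0.
by exists s; rewrite /c -j_lift -sqmonU1 // mulrn_eq0 negb_or wj_neq0.
Qed.

Lemma cone_lift_face i w (s : {set 'I_n.+1}) : base_stress i w ->
  (cone_lift w)@_(sqmon s) != 0 ->
  exists2 sig : {set 'I_n.+1}, (#|sig| == #|s|) && (w@_(sqmon sig) != 0) & s :\ ord0 \subset sig.
Proof.
move=> w_stress; have [s0|s0] := boolP (ord0 \in s); last first.
  rewrite mcoeff_cone_lift_base // => ws_neq0.
  by exists s; rewrite ?eqxx ?ws_neq0 // subD1set.
rewrite -{1}(setD1K s0) mcoeff_cone_lift_apex ?setD11 // (mcoeff_dlin_apex w_stress) ?setD11 //.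
case/existsP => j /andP [j_tau wj_neq0]; exists (j |: s :\ ord0); last exact: subsetUr.
by rewrite wj_neq0 (cardsD1 ord0 s) s0 cardsU1 j_tau eqxx.
Qed.

Lemma supp_cone_lift i w : base_stress i w ->
  supp i (cone_lift w) = skel_card i (cone ord0 (supp i w)).
Proof.
move=> w_stress; apply/setP => t; rewrite /supp /skel_card [LHS]inE [RHS]inE.
apply/existsP/andP.
- case=> s /and3P [/eqP s_card ws_neq0 t_sub].
  have [sig /andP [sig_card wsig_neq0] s_sub] := cone_lift_face w_stress ws_neq0.
  split; last by rewrite -s_card subset_leq_card.
  apply: mem_coneD1; rewrite inE; apply/existsP; exists sig.
  by rewrite (eqP sig_card) s_card eqxx wsig_neq0 (subset_trans _ s_sub) ?setSD.
- rewrite inE => -[/existsP [u /andP [+ t_u]] t_le].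
  rewrite inE => /existsP [sig /and3P [/eqP sig_card wsig_neq0 u_sig]].
  have sig0 : ord0 \notin sig.
    by have := stress_apex_free w_stress wsig_neq0; rewrite mono_supp_sqmon.
  have u0 : ord0 \notin u by apply: contra sig0; apply: (subsetP u_sig).
  case/orP: t_u => /eqP t_eq; subst t.
    by exists sig; rewrite sig_card eqxx mcoeff_cone_lift_base ?wsig_neq0.
  have [j /setDP [j_sig j_u]] : exists j, j \in sig :\: u.
    apply/set0Pn; rewrite setD_eq0; apply: contraTN t_le => /subset_leq_card.
    by rewrite cardsU1 u0 -sig_card -ltnNge.
  exists (ord0 |: sig :\ j); apply/and3P; split.
  + by rewrite cardsU1 !inE negb_and sig0 orbT -sig_card (cardsD1 j sig) j_sig.
  + rewrite mcoeff_cone_lift_apex ?(mcoeff_dlin_apex w_stress) ?inE ?negb_and ?sig0 ?orbT //.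
    by apply/existsP; exists j; rewrite setD11 setD1K.
  + apply: setUS; apply/subsetP => x x_u; rewrite !inE (subsetP u_sig) // andbT.
    by apply: contraNneq j_u => <-.
Qed.
End ConeLift.

Theorem lemma3p1 (R : realType) (n e : nat) (Lam : {set {set 'I_n.+1}})
    (p' : 'I_n.+1 -> 'I_e -> R) (a : 'I_n.+1 -> R) (F : R -> Prop) :
  let W' := [set v : 'I_n.+1 | v != ord0] in
  is_complex W' Lam -> card_dim Lam e ->
  alg_indep (@rat_field R) (fun st : 'I_n * 'I_e => p' (lift ord0 st.1) st.2) ->
  let F' := gen_field (fun x : R => exists s t, s != ord0 /\ x = p' s t) in
  alg_indep F' (fun s : 'I_n => a (lift ord0 s)) ->
  subfield F ->
  (forall x, gen_field (fun y => F' y \/ exists s, s != ord0 /\ y = a s) x -> F x) ->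
  let p := fun (v : 'I_n.+1) (t : 'I_e.+1) =>
    if v == ord0 then (if t == ord_max then -1 else 0)
    else match unlift ord_max t with
         | Some t' => (1 + a v) * p' v t'
         | None => a v
         end in
  let Gam := cone ord0 Lam in
  exists psi : nat -> {mpoly R[n.+1]} -> {mpoly R[n.+1]},
    (forall i : nat, (i <= e)%N ->
       [/\ (forall w, is_stress F' W' Lam p' i w ->
              is_stress F [set: 'I_n.+1] Gam p i (psi i w)),
           (forall (c : R) w1 w2, F' c ->
              is_stress F' W' Lam p' i w1 -> is_stress F' W' Lam p' i w2 ->
              psi i (c *: w1 + w2) = c *: psi i w1 + psi i w2) &
           (forall w, is_stress F' W' Lam p' i w ->
              supp i (psi i w) = skel_card i (cone ord0 (supp i w)))]) /\
    (forall i : nat, (1 <= i <= e)%N -> forall w, is_stress F' W' Lam p' i w ->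
       psi i.-1 (dlin (fun v => if v == ord0 then 0 else 1) w)
       = dlin (fun _ => 1) (psi i w)).
Proof.
move=> W' Lam_complex Lam_dim p'_indep F' a_indep F_subfield F_ge p Gam.
exists (fun _ => cone_lift a); split=> [i _ | i _ w _].
  split=> [w w_stress | c w1 w2 _ _ _ | w w_stress].
  - exact: (stress_cone_lift Lam_complex a_indep F_subfield F_ge w_stress).
  - exact: cone_lift_lin.
  - exact: (supp_cone_lift Lam_complex Lam_dim p'_indep a_indep w_stress).
exact: (cone_lift_dlin_sum a_indep).
Qed.
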